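(* Let $k\ge 1$. There is no deterministic exploration algorithm that, knowing $k$, having unlimited memory, but having no information on the number of sites $n$ nor on (any upper bound on) the system period $p$, solves PVG-Exploration of every feasible homogeneous PV graph with distinct site identifiers and $k$ carriers (over all numbers of sites $n\ge k$ and all periods).
   Context: A PV (periodically varying) system consists of a finite set $S$ of $n$ sites and a set $C$ of $k\le n$ carriers. Each carrier $c$ has a distinct identifier and a route $\pi(c)=\langle x_0,\dots,x_{p(c)-1}\rangle$, a finite sequence of sites (repetitions allowed) of length $p(c)\ge 1$ called its period; for any integer $j$, $\pi(c)[j]$ denotes $x_{j \bmod p(c)}$. At each time $t\in\mathbb{N}$ carrier $c$ is at site $\pi(c)[t]$ and moves to $\pi(c)[t+1]$. The PV graph $\vec G_R$ is the directed edge-labelled multigraph on $S$ with edges $(x_i,x_{i+1},i)$, $0\le i<p(c)$ (indices mod $p(c)$), for every carrier $c$. Let $p=\max_{c}p(c)$. The system is homogeneous if all carriers have the same period. In a system with ids, sites have distinct identifiers visible to the agent. An exploring agent is injected at time $0$ at a site of $\mathrm{start}(\vec G_R)=\{\pi(c)[0]:c\in C\}$. If at time $t$ the agent is at site $x$, it must either choose a carrier $c$ with $\pi(c)[t]=x$ and ride with it to $\pi(c)[t+1]$ (one move), or halt and exit; it cannot wait at a site. At each time the agent observes the identifiers of the carriers present at its current site and the identifier of the site. An exploration algorithm is a deterministic rule mapping the agent's a priori knowledge and history of observations to its next action; its execution from injection site $x$ determines a walk $\xi(x)$. A walk is a concrete cover if it visits every site. An algorithm solves PVG-Exploration of $\vec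 G_R$ if for every $x\in\mathrm{start}(\vec G_R)$, $\xi(x)$ is finite and a concrete cover. $\vec G_R$ is feasible if from the starting point of every carrier there exists a walk realizable by the agent (riding carriers and switching between carriers at the same site at the same time) that is a concrete cover. *)

From mathcomp Require Import all_boot.
Set Implicit Arguments. Unset Strict Implicit. Unset Printing Implicit Defensive.

(* Sites and carriers are identified by
   natural-number identifiers.  [sites] lists the site set S (ids distinct),
   [cid i] is the identifier of carrier i, [route i] its route pi(c). *)
Record PV (k : nat) := MkPV {
  sites : seq nat;
  cid   : 'I_k -> nat;
  route : 'I_k -> seq nat
}.

Definition wf_PV k (R : PV k) : Prop :=
  [/\ uniq (sites R), k <= size (sites R),
      (forall i j, cid R i = cid R j -> i = j),
      (forall i, 0 < size (route R i)) &
      (forall i, {subset route R i <= sites R})].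

Definition homogeneous k (R : PV k) : Prop :=
  forall i j, size (route R i) = size (route R j).

Definition pos k (R : PV k) (i : 'I_k) (t : nat) : nat :=
  nth 0 (route R i) (t %% size (route R i)).

Definition is_start k (R : PV k) (x : nat) : Prop := exists i, pos R i 0 = x.

Definition realizable k (R : PV k) (w : seq nat) : Prop :=
  forall j, j.+1 < size w ->
    exists i, pos R i j = nth 0 w j /\ pos R i j.+1 = nth 0 w j.+1.

Definition concrete_cover k (R : PV k) (w : seq nat) : Prop :=
  {subset sites R <= w}.

Definition feasible k (R : PV k) : Prop :=
  forall i, exists w, realizable R (pos R i 0 :: w) /\
                      concrete_cover R (pos R i 0 :: w).

(* Observation at a time: (site id, sorted list of ids of carriers present). *)
Definition observation := (nat * seq nat)%type.

Definition observe k (R : PV k) (t x : nat) : observation :=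
  (x, sort leq [seq cid R i | i <- enum 'I_k & pos R i t == x]).

(* A deterministic exploration algorithm (unlimited memory): maps the full
   history of observations (the last one being the current) to an action:
   None = halt, Some c = ride the carrier with identifier c. It knows k
   only through the ambient quantification (it may depend on k). *)
Definition algorithm := seq observation -> option nat.

(* Execution with fuel.  Returns Some walk iff the agent halts within
   [fuel] steps, having only chosen carriers present at its site.
   Choosing an absent carrier is an invalid move (None). *)
Fixpoint run k (A : algorithm) (R : PV k) (fuel t x : nat)
    (hist : seq observation) : option (seq nat) :=
  match fuel with
  | 0 => None
  | f.+1 =>
    let h := rcons hist (observe R t x) in
    match A h with
    | None => Some [:: x]
    | Some c =>
      match [pick i | (cid R i == c) && (pos R i t == x)] with
      | None => None
      | Some i => omap (cons x) (run A R f t.+1 (pos R i t.+1) h)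
      end
    end
  end.

Definition solves k (A : algorithm) (R : PV k) : Prop :=
  forall x, is_start R x ->
    exists fuel w, run A R fuel 0 x [::] = Some w /\ concrete_cover R w.

From mathcomp Require Import all_boot.
Set Implicit Arguments. Unset Strict Implicit. Unset Printing Implicit Defensive.

(* Suppose an algorithm A explores every
   feasible homogeneous system with k carriers.  Run it on the "ring" system:
   sites 0..k-1, every carrier cycling through 0,1,...,k-1.  Started at site
   0, A halts after some number F of steps with a walk w; every site of w is
   below k.  Now build the "trap" system: sites 0..k, every carrier follows
   the ring route for F+k steps and then visits the new site k once, so its
   period is F+k+1.  Up to time F both systems place the carriers identically
   (and carrier ids coincide), so A observes exactly the same history and
   halts with the same walk w, which misses site k -- yet the trap system is
   feasible, so A should have covered it. *)

Section Execution.
Variables (k : nat) (A : algorithm).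

Lemma run_agree (R0 R1 : PV k) fuel t x hist :
  (forall i, cid R0 i = cid R1 i) ->
  (forall i s, s <= t + fuel -> pos R0 i s = pos R1 i s) ->
  run A R0 fuel t x hist = run A R1 fuel t x hist.
Proof.
move=> same_cid; elim: fuel t x hist => [//|f IH] t x hist same_pos /=.
have same_now i : pos R0 i t = pos R1 i t by rewrite same_pos ?leq_addr.
have -> : observe R0 t x = observe R1 t x.
  rewrite /observe; congr (_, sort _ _).
  rewrite (eq_filter (a2 := fun i => pos R1 i t == x)); last by move=> i; rewrite same_now.
  exact: eq_map.
case: (A _) => [c|//].
have -> : [pick i | (cid R0 i == c) && (pos R0 i t == x)] =
          [pick i | (cid R1 i == c) && (pos R1 i t == x)].
  by apply: eq_pick => i /=; rewrite same_cid same_now.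
case: [pick i | _] => [i|//].
rewrite same_pos; last by rewrite addnS ltnS leq_addr.
by rewrite IH // => j s le_s; apply: same_pos; rewrite addnS -addSn.
Qed.

Lemma run_elems (R : PV k) fuel t x hist w :
  run A R fuel t x hist = Some w ->
  forall y, y \in w -> y = x \/ exists i s, y = pos R i s.
Proof.
elim: fuel t x hist w => [//|f IH] t x hist w /=.
case: (A _) => [c|]; last by case=> <- y; rewrite inE => /eqP; left.
case: [pick i | _] => [i|//].
case E: (run _ _ _ _ _ _) => [w'|//] /= [<-] y.
rewrite inE => /orP [/eqP|/(IH _ _ _ _ E y)]; first by left.
by case=> [->|[j [s ->]]]; right; [exists i, t.+1 | exists j, s].
Qed.

Lemma run_mono (R : PV k) f f' t x hist w :
  f <= f' -> run A R f t x hist = Some w -> run A R f' t x hist = Some w.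
Proof.
elim: f f' t x hist w => [//|f IH] [//|f'] t x hist w /= le_f.
case: (A _) => [c|//]; case: [pick i | _] => [i|//].
by case E: (run _ _ _ _ _ _) => [w'|//]; rewrite (IH f' _ _ _ w').
Qed.

Lemma run_det (R : PV k) f1 f2 t x hist w1 w2 :
  run A R f1 t x hist = Some w1 -> run A R f2 t x hist = Some w2 -> w1 = w2.
Proof.
case: (leqP f1 f2) => [le12|/ltnW le21] E1 E2.
  by move: (run_mono le12 E1); rewrite E2 => -[].
by move: (run_mono le21 E2); rewrite E1 => -[].
Qed.
End Execution.

Definition uniform_system k (ss r : seq nat) : PV k :=
  MkPV ss (fun i : 'I_k => val i) (fun _ => r).

Lemma pos_uniform k (ss r : seq nat) (i : 'I_k) t :
  pos (uniform_system k ss r) i t = nth 0 r (t %% size r).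
Proof. by []. Qed.

(* A uniform system whose route visits exactly its sites is well formed,
   homogeneous and feasible: ride any carrier for one period. *)
Lemma uniform_system_ok k (ss r : seq nat) :
  uniq ss -> k <= size ss -> 0 < size r -> r =i ss ->
  [/\ wf_PV (uniform_system k ss r), homogeneous (uniform_system k ss r)
    & feasible (uniform_system k ss r)].
Proof.
move=> uniq_ss k_le r_gt0 r_ss; split => //.
- by split => // [i j /val_inj | i y]; rewrite ?r_ss.
- move=> i; exists (behead r).
  have -> : pos (uniform_system k ss r) i 0 :: behead r = r.
    by rewrite pos_uniform mod0n; case: r r_gt0 {r_ss}.
  split => [j lt_j|y]; last by rewrite r_ss.
  by exists i; rewrite !pos_uniform !modn_small // ltnW.
Qed.

Lemma uniform_start k (ss r : seq nat) :
  0 < k -> is_start (uniform_system k ss r) (nth 0 r 0).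
Proof. by move=> k_gt0; exists (Ordinal k_gt0); rewrite pos_uniform mod0n. Qed.

Definition ring_system k : PV k := uniform_system k (iota 0 k) (iota 0 k).

Lemma pos_ring k (i : 'I_k) t : 0 < k -> pos (ring_system k) i t = t %% k.
Proof. by move=> k_gt0; rewrite pos_uniform size_iota nth_iota ?ltn_pmod. Qed.

Definition trap_route k F : seq nat := mkseq (fun t => t %% k) (F + k) ++ [:: k].

Definition trap_system k F : PV k := uniform_system k (iota 0 k.+1) (trap_route k F).

Lemma size_trap_route k F : size (trap_route k F) = (F + k).+1.
Proof. by rewrite size_cat size_mkseq addn1. Qed.

(* The trap route visits exactly the sites 0..k (it has length >= k). *)
Lemma mem_trap_route k F : 0 < k -> trap_route k F =i iota 0 k.+1.
Proof.
move=> k_gt0 y; rewrite mem_cat inE mem_iota /= ltnS leq_eqVlt orbC.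
congr (_ || _); apply/mapP/idP => [[t _ ->]|lt_y]; first exact: ltn_pmod.
by exists y; rewrite ?modn_small // mem_iota (leq_trans lt_y) ?leq_addl.
Qed.

Lemma trap_agrees_ring k F (i : 'I_k) s : 0 < k -> s <= F ->
  pos (ring_system k) i s = pos (trap_system k F) i s.
Proof.
move=> k_gt0 le_s.
have lt_s : s < F + k by rewrite (leq_ltn_trans le_s) // -{1}(addn0 F) ltn_add2l.
have lt_s1 : s < (F + k).+1 by apply: ltnW.
rewrite pos_ring // pos_uniform size_trap_route (modn_small lt_s1).
by rewrite nth_cat size_mkseq lt_s nth_mkseq.
Qed.

Lemma ring_system_ok k : 0 < k ->
  [/\ wf_PV (ring_system k), homogeneous (ring_system k), feasible (ring_system k)
    & is_start (ring_system k) 0].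
Proof.
move=> k_gt0.
have [||||wf hom feas] := @uniform_system_ok k (iota 0 k) (iota 0 k).
- exact: iota_uniq.
- by rewrite size_iota.
- by rewrite size_iota.
- by [].
by split => //; have := uniform_start (iota 0 k) (iota 0 k) k_gt0; rewrite nth_iota.
Qed.

Lemma trap_system_ok k F : 0 < k ->
  [/\ wf_PV (trap_system k F), homogeneous (trap_system k F), feasible (trap_system k F)
    & is_start (trap_system k F) 0].
Proof.
move=> k_gt0.
have [||||wf hom feas] := @uniform_system_ok k (iota 0 k.+1) (trap_route k F).
- exact: iota_uniq.
- by rewrite size_iota.
- by rewrite size_trap_route.
- exact: mem_trap_route.
split => //; have := uniform_start (iota 0 k.+1) (trap_route k F) k_gt0.
have lt0 : 0 < F + k by rewrite addn_gt0 k_gt0 orbT.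
by rewrite nth_cat size_mkseq lt0 nth_mkseq // mod0n.
Qed.

Theorem mainTheorem2 (k : nat) (hk : 0 < k) :
  ~ exists A : algorithm,
      forall R : PV k, wf_PV R -> homogeneous R -> feasible R -> solves A R.
Proof.
move=> [A solves_all].
have [wf0 hom0 feas0 start0] := ring_system_ok hk.
have [F [w [run_ring _]]] := solves_all _ wf0 hom0 feas0 _ start0.
have [wf1 hom1 feas1 start1] := trap_system_ok F hk.
have run_trap : run A (trap_system k F) F 0 0 [::] = Some w.
  by rewrite -run_ring; apply: run_agree => // i s; rewrite add0n => le_s; exact: esym (trap_agrees_ring i hk le_s).
have [F1 [w1 [run_trap1 covers]]] := solves_all _ wf1 hom1 feas1 _ start1.
rewrite -(run_det run_trap run_trap1) in covers.
have /(run_elems run_ring) [k_eq0|[i [s k_pos]]] : k \in w.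
  by apply: covers; rewrite mem_iota ltnSn.
- by rewrite k_eq0 in hk.
- by move: (ltn_pmod s hk); rewrite -(pos_ring i s hk) -k_pos ltnn.
Qed.
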